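(* For every normed BPA system $\mathcal{G}=(V,\mathit{Act},\mathcal{R})$ (with $V$ linearly ordered) and all $\alpha,\beta\in V^*$: $\mathcal{T}^\mathcal{G}(\alpha)=\mathcal{T}^\mathcal{G}(\beta)$ if and only if $\alpha\sim\beta$ in $\mathcal{L}_\mathcal{G}$.
   Context: BPA system $\mathcal{G}=(V,\mathit{Act},\mathcal{R})$: finite variables $V$, finite actions (possibly with silent $\tau$), rules $A\xrightarrow{a}\alpha$; LTS $\mathcal{L}_\mathcal{G}$ on $V^*$ with $A\beta\xrightarrow{a}\alpha\beta$ for rules $A\xrightarrow{a}\alpha$. Normed: each variable can reach $\varepsilon$. $\sim$: branching bisimilarity in $\mathcal{L}_\mathcal{G}$ (largest relation $\mathcal{B}$ such that for $(s,t)\in\mathcal{B}$ each move $s\xrightarrow{a}s'$ is matched by $a=\tau,(s',t)\in\mathcal{B}$, or by $t=t_0\xrightarrow{\tau}\cdots\xrightarrow{\tau}t_k\xrightarrow{a}t'$ with $(s',t')\in\mathcal{B}$ and $(s,t_i)\in\mathcal{B}$ for $i\in[1,k]$; and symmetrically). Transducers read right to left: $q'\xleftarrow{A/\gamma}q$ means $\Delta(q,A)=(q',\gamma)$, extended to strings by $q\xleftarrow{\varepsilon/\varepsilon}q$ and composition ($q'\xleftarrow{A/\gamma}q$, $q''\xleftarrow{\alpha/\beta}q'$ give $q''\xleftarrow{\alpha A/\beta\gamma}q$); $\mathcal{T}_q(\alpha)$ is the output from $q$ on $\alpha$, $\mathcal{T}(\alpha)=\mathcal{T}_{q_0}(\alpha)$.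 Canonical transducer: $R_\gamma=\{X\in V\mid X\gamma\sim\gamma\}$; prefix $\alpha$ of $\alpha\gamma$ is redundancy-free if not of the form $\delta X\beta$ with $X\beta\gamma\sim\beta\gamma$; $\alpha$ lexicographically smaller than $\beta$ if $\alpha$ is a proper suffix of $\beta$ or $\alpha=\alpha'A\gamma,\beta=\beta'B\gamma$ with $A<B$. $\mathcal{T}^\mathcal{G}=(Q,V,\Delta,q_0)$: $Q=\{R_\gamma\mid\gamma\in V^*\}$, $q_0=R_\varepsilon$, $\Delta(R_\gamma,A)=(R_{A\gamma},\alpha)$ where $\alpha$ is lexicographically smallest among the longest strings with $\alpha\gamma\sim A\gamma$ and $\alpha$ a redundancy-free prefix of $\alpha\gamma$ (well defined, depends only on $R_\gamma$). *)

From HB Require Import structures.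
From mathcomp Require Import all_boot all_order.
From Stdlib Require Import Relations ClassicalEpsilon.
Set Implicit Arguments. Unset Strict Implicit. Unset Printing Implicit Defensive.
Import Order.TTheory.

Section BPA.
Variables (d : Order.disp_t) (V : finOrderType d) (Act : finType).

(* A BPA system: finite set of rules A --a--> alpha; the action [None] is the
   silent action tau, [Some a] a visible action. *)
Definition rules := seq (V * option Act * seq V).

Variable R : rules.

Definition step (s : seq V) (a : option Act) (t : seq V) : Prop :=
  exists (A : V) (beta alpha : seq V),
    s = A :: beta /\ (A, a, alpha) \in R /\ t = alpha ++ beta.

Definition reach : relation (seq V) :=
  clos_refl_trans (seq V) (fun u v => exists a, step u a v).

Definition normed : Prop := forall A : V, reach [:: A] [::].

Definition transfer (B : seq V -> seq V -> Prop) (s t : seq V) : Prop :=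
  forall a s', step s a s' ->
    (a = None /\ B s' t) \/
    exists tk t', clos_refl_trans (seq V)
                    (fun u v => step u None v /\ B s v) t tk
                  /\ step tk a t' /\ B s' t'.

Definition branching_bisimulation (B : seq V -> seq V -> Prop) : Prop :=
  forall s t, B s t -> transfer B s t /\ transfer (fun x y => B y x) t s.

Definition bbisim (s t : seq V) : Prop :=
  exists B, branching_bisimulation B /\ B s t.

Definition Rset (gamma : seq V) : V -> Prop := fun X => bbisim (X :: gamma) gamma.

Definition redundancy_free (alpha gamma : seq V) : Prop :=
  ~ exists (delta : seq V) (X : V) (beta : seq V),
      alpha = delta ++ X :: beta /\ bbisim (X :: beta ++ gamma) (beta ++ gamma).

(* lexicographic order (comparing from the right) *)
Definition lexlt (alpha beta : seq V) : Prop :=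
  (exists pre, pre != [::] /\ beta = pre ++ alpha) \/
  exists alpha' beta' (A B : V) gamma,
    alpha = alpha' ++ A :: gamma /\ beta = beta' ++ B :: gamma /\ (A < B)%O.

Definition candidate (A : V) (gamma alpha : seq V) : Prop :=
  bbisim (alpha ++ gamma) (A :: gamma) /\ redundancy_free alpha gamma.

Definition canonical_output (A : V) (gamma alpha : seq V) : Prop :=
  candidate A gamma alpha /\
  (forall beta, candidate A gamma beta -> size beta <= size alpha) /\
  (forall beta, candidate A gamma beta -> size beta = size alpha ->
     beta = alpha \/ lexlt alpha beta).

Record transducer := Transducer {
  tr_state : Type;
  tr_delta : tr_state -> V -> tr_state * seq V;
  tr_init : tr_state }.

(* run q alpha = (q', beta) iff  q' <-alpha/beta- q  (input read right to left) *)
Fixpoint tr_run (T : transducer) (q : tr_state T) (alpha : seq V)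
  : tr_state T * seq V :=
  match alpha with
  | [::] => (q, [::])
  | A :: alpha' =>
      let (q', out) := tr_run q alpha' in
      let (q'', o) := tr_delta q' A in (q'', o ++ out)
  end.

Definition tr_out (T : transducer) (alpha : seq V) : seq V :=
  (tr_run (tr_init T) alpha).2.

(* Canonical transducer: states are the sets R_gamma (as predicates on V);
   Delta(R_gamma, A) = (R_{A gamma}, alpha) computed from a representative gamma. *)
Definition canon_delta (q : V -> Prop) (A : V) : (V -> Prop) * seq V :=
  let gamma := epsilon (inhabits [::]) (fun g => Rset g = q) in
  (Rset (A :: gamma), epsilon (inhabits [::]) (canonical_output A gamma)).

Definition canonical_transducer : transducer :=
  @Transducer (V -> Prop) canon_delta (Rset [::]).

Definition TG (alpha : seq V) : seq V := tr_out canonical_transducer alpha.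

End BPA.

From mathcomp Require Import all_boot all_order.
From Stdlib Require Import Relations ClassicalEpsilon Classical FunctionalExtensionality PropExtensionality.
From mathcomp Require Import zify.
Set Implicit Arguments. Unset Strict Implicit. Unset Printing Implicit Defensive.
Import Order.TTheory.

(* In a normed system call [r] a representation of [s] when [r] is redundancy-free and
   bisimilar to [s]. A redundancy-free string needs a non-inert step per letter to
   terminate, so representations have bounded length, and [s] has a unique
   lexicographically least longest representation, which depends only on the
   bisimilarity class of [s]. The theorem follows once the canonical transducer is seen
   to output exactly this representation. That is proved by induction on [s]: a longest
   representation of [A :: g] is a longest candidate for [A] over [g] followed by a
   representation of [g], for otherwise a redundancy-free string could be lengthened.
   The transducer may work with any representative [g] of its state [R_g], because the
   bisimilarity of [a ++ g] and [b ++ g] only depends on [R_g]. *)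

Lemma clos_rt_map (A B : Type) (f : A -> B) (r : relation A) (r' : relation B) x y :
  (forall a b, r a b -> r' (f a) (f b)) ->
  clos_refl_trans A r x y -> clos_refl_trans B r' (f x) (f y).
Proof.
move=> H; elim=> [a b /H|a|a b c _ IH1 _ IH2]; first exact: rt_step.
- exact: rt_refl.
- exact: rt_trans IH1 IH2.
Qed.

Lemma clos_rt_mono (A : Type) (r r' : relation A) x y :
  (forall a b, r a b -> r' a b) -> clos_refl_trans A r x y -> clos_refl_trans A r' x y.
Proof. exact: (@clos_rt_map A A id). Qed.

Lemma ex_min (P : nat -> Prop) : (exists n, P n) -> exists n, P n /\ forall m, P m -> n <= m.
Proof.
move=> [n Pn]; elim/ltn_ind: n Pn => n IH Pn.
case: (classic (exists2 m, P m & m < n)) => [[m Pm /IH]|NP]; first exact.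
exists n; split=> // m Pm; rewrite leqNgt; apply/negP => ltmn; apply: NP.
by exists m.
Qed.

(** * Least longest strings *)

Section LeastLongest.
Variables (d : Order.disp_t) (V : finOrderType d).

(* Lexicographic order read from the left; [lexlt] reads from the right. *)
Fixpoint ltlex (s t : seq V) : Prop :=
  match s, t with
  | x :: s', y :: t' => (x < y)%O \/ x = y /\ ltlex s' t'
  | _, _ => False
  end.

Lemma ltlex_catl p u v : ltlex (p ++ u) (p ++ v) <-> ltlex u v.
Proof.
elim: p => [|x p IH] //=; rewrite ltxx.
by split=> [[//|[_ /IH]]|/IH]; last by right.
Qed.

Lemma ltlex_asym s t : ltlex s t -> ltlex t s -> False.
Proof.
elim: s t => [|x s IH] [|y t] //= [lt_xy|[-> lt_st]] [lt_yx|[Eyx lt_ts]].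
- by have := lt_trans lt_xy lt_yx; rewrite ltxx.
- by rewrite Eyx ltxx in lt_xy.
- by rewrite ltxx in lt_yx.
- exact: IH lt_st lt_ts.
Qed.

Lemma lexlt_same_size (s t : seq V) : size s = size t -> lexlt s t ->
  exists s' t' (x y : V) u, s = s' ++ x :: u /\ t = t' ++ y :: u /\ (x < y)%O.
Proof.
move=> Est [[pre [pre_nonnil Et]]|//].
by move: Est; rewrite Et size_cat; case: pre pre_nonnil {Et} => // x p _ /=; lia.
Qed.

Lemma lexlt_ltlex_rev (s t : seq V) : size s = size t -> lexlt s t -> ltlex (rev s) (rev t).
Proof.
move=> Est /(lexlt_same_size Est) [s' [t' [x [y [u [-> [-> lt_xy]]]]]]].
by rewrite !rev_cat !rev_cons -!cats1 -!catA ltlex_catl /=; left.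
Qed.

Lemma ltlex_lexlt_rev (s t : seq V) : size s = size t -> ltlex s t -> lexlt (rev s) (rev t).
Proof.
elim: s t => [|x s IH] [|y t] //= [] Est [lt_xy|[<- lt_st]].
  by right; exists (rev s), (rev t), x, y, [::]; rewrite !rev_cons -!cats1.
have Est' : size (rev s) = size (rev t) by rewrite !size_rev.
have [s' [t' [z [w [u [Es [Et lt_zw]]]]]]] := lexlt_same_size Est' (IH _ Est lt_st).
right; exists s', t', z, w, (rcons u x).
by rewrite !rev_cons Es Et -!cats1 -!catA.
Qed.

Lemma lexlt_asym (s t : seq V) : size s = size t -> lexlt s t -> lexlt t s -> False.
Proof.
move=> Est lt_st lt_ts.
exact: ltlex_asym (lexlt_ltlex_rev Est lt_st) (lexlt_ltlex_rev (esym Est) lt_ts).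
Qed.

Lemma lexlt_cat (s1 s2 t1 t2 : seq V) : size s1 = size t1 -> size s2 = size t2 ->
  (s1 = t1 \/ lexlt t1 s1) -> (s2 = t2 \/ lexlt t2 s2) ->
  s1 ++ s2 = t1 ++ t2 \/ lexlt (t1 ++ t2) (s1 ++ s2).
Proof.
move=> E1 E2 [->|lt1] [->|lt2]; first by left.
- have [a' [b' [x [y [u [Ea [Eb lt_xy]]]]]]] := lexlt_same_size (esym E2) lt2.
  by right; right; exists (t1 ++ a'), (t1 ++ b'), x, y, u; rewrite Ea Eb !catA.
- have [a' [b' [x [y [u [Ea [Eb lt_xy]]]]]]] := lexlt_same_size (esym E1) lt1.
  by right; right; exists a', b', x, y, (u ++ t2); rewrite Ea Eb -!catA.
- have [a' [b' [x [y [u [Ea [Eb lt_xy]]]]]]] := lexlt_same_size (esym E2) lt2.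
  by right; right; exists (t1 ++ a'), (s1 ++ b'), x, y, u; rewrite Ea Eb !catA.
Qed.

Let rank (x : V) := #|[pred y : V | (y < x)%O]|.

Let rank_lt x y : (x < y)%O -> rank x < rank y.
Proof.
move=> lt_xy; apply: proper_card; apply/properP; split.
  by apply/subsetP=> z; rewrite !inE => /lt_trans; apply.
by exists x; rewrite !inE ?ltxx.
Qed.

Lemma ltlex_min n (Q : seq V -> Prop) : (exists s, Q s) -> (forall s, Q s -> size s = n) ->
  exists s, Q s /\ forall t, Q t -> t = s \/ ltlex s t.
Proof.
elim: n Q => [|n IH] Q [s0 Qs0] sizeQ.
  exists s0; split=> // t Qt; left.
  by move: (sizeQ _ Qt) (sizeQ _ Qs0) => /size0nil-> /size0nil->.
pose heads k := exists x, rank x = k /\ exists u, Q (x :: u).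
have [k [[x0 [<- [u Qu]]] Hmin]] : exists k, heads k /\ forall m, heads m -> k <= m.
  apply: ex_min; case: s0 Qs0 (sizeQ _ Qs0) => // x u Qxu _.
  by exists (rank x), x; split=> //; exists u.
have [u0 [Qu0 Hu0]] := IH (fun u => Q (x0 :: u)) (ex_intro _ u Qu)
  (fun u Qu => eq_add_S _ _ (sizeQ _ Qu)).
exists (x0 :: u0); split=> // [[|y v]] Qyv; first by have := sizeQ _ Qyv.
move: Qyv; case: (ltgtP x0 y) => [lt_x0y|lt_yx0|<-] Qyv; first by right; left.
  have := Hmin (rank y) (ex_intro _ y (conj erefl (ex_intro _ v Qyv))).
  by rewrite leqNgt rank_lt.
by case: (Hu0 _ Qyv) => [->|lt_u0v]; [left | right; right].
Qed.

Lemma lexlt_min n (P : seq V -> Prop) : (exists s, P s) -> (forall s, P s -> size s = n) ->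
  exists s, P s /\ forall t, P t -> t = s \/ lexlt s t.
Proof.
move=> [s0 Ps0] sizeP.
have exQ : exists u, P (rev u) by exists (rev s0); rewrite revK.
have sizeQ u : P (rev u) -> size u = n by move/sizeP; rewrite size_rev.
have [u [Pu Hu]] := ltlex_min exQ sizeQ.
exists (rev u); split=> // t Pt; rewrite -(revK t) in Pt.
case: (Hu _ Pt) => [<-|lt_ut]; first by left; rewrite revK.
right; rewrite -(revK t); apply: ltlex_lexlt_rev lt_ut.
by rewrite -size_rev (sizeP _ Pu) -(sizeP _ Pt) size_rev.
Qed.

(* [canonical_output R A g] is, by definition, [least_longest (candidate R A g)]. *)
Definition least_longest (P : seq V -> Prop) (s : seq V) : Prop :=
  P s /\ (forall t, P t -> size t <= size s) /\
  (forall t, P t -> size t = size s -> t = s \/ lexlt s t).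

Lemma least_longest_unique P s t : least_longest P s -> least_longest P t -> s = t.
Proof.
move=> [Ps [Hs1 Hs2]] [Pt [Ht1 Ht2]].
have Est : size s = size t by apply/eqP; rewrite eqn_leq Ht1 ?Hs1.
case: (Hs2 _ Pt (esym Est)) => [//|lt_st].
case: (Ht2 _ Ps Est) => [//|lt_ts].
case: (lexlt_asym Est lt_st lt_ts).
Qed.

Lemma least_longest_ext P Q s :
  (forall t, P t <-> Q t) -> least_longest P s -> least_longest Q s.
Proof.
move=> PQ [/PQ Qs [Hs1 Hs2]]; split=> //; split=> t /PQ; first exact: Hs1.
exact: Hs2.
Qed.

Lemma ex_longest (P : seq V -> Prop) m : (exists s, P s) -> (forall s, P s -> size s <= m) ->
  exists s, P s /\ forall t, P t -> size t <= size s.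
Proof.
move=> [s0 Ps0] leP.
pose gap k := exists2 s, P s & m - size s = k.
have [k [[s Ps <-] Hmin]] : exists k, gap k /\ forall j, gap j -> k <= j.
  by apply: ex_min; exists (m - size s0), s0.
exists s; split=> // t Pt; have := Hmin _ (ex_intro2 _ _ t Pt erefl).
by have := leP _ Pt; have := leP _ Ps; lia.
Qed.

Lemma least_longest_exists P m : (exists s, P s) -> (forall s, P s -> size s <= m) ->
  exists s, least_longest P s.
Proof.
move=> exP leP; have [s [Ps Hs]] := ex_longest exP leP.
have [t [[Pt Et] Ht]] := @lexlt_min (size s) (fun t => P t /\ size t = size s)
  (ex_intro _ s (conj Ps erefl)) (fun t => @proj2 _ _).
exists t; split=> //; split=> [u Pu|u Pu Eu]; first by rewrite Et; apply: Hs.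
by apply: Ht; rewrite Eu.
Qed.

Lemma least_longest_cat (P P1 P2 : seq V -> Prop) s1 s2 m :
  (forall s, P s -> size s <= m) ->
  (forall s, P s -> (forall t, P t -> size t <= size s) ->
     exists s1' s2', [/\ s = s1' ++ s2', P1 s1' & P2 s2']) ->
  P (s1 ++ s2) -> least_longest P1 s1 -> least_longest P2 s2 ->
  least_longest P (s1 ++ s2).
Proof.
move=> leP splitP Ps [_ [le1 lex1]] [_ [le2 lex2]].
have [s [Ps' Hs]] := ex_longest (ex_intro _ _ Ps) leP.
have le_s t : P t -> size t <= size s1 + size s2.
  move=> /Hs le_ts; apply: leq_trans le_ts _.
  have [u1 [u2 [-> /le1 ? /le2 ?]]] := splitP _ Ps' Hs.
  by rewrite size_cat leq_add.
split=> //; split=> [t /le_s|t Pt]; first by rewrite size_cat.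
rewrite size_cat => Et.
have maxt u : P u -> size u <= size t by move/le_s; rewrite Et.
have [u1 [u2 [Eu P1u1 P2u2]]] := splitP _ Pt maxt; subst t.
have := le1 _ P1u1; have := le2 _ P2u2; rewrite size_cat in Et => le_u2 le_u1.
have E1 : size u1 = size s1 by lia.
have E2 : size u2 = size s2 by lia.
exact: lexlt_cat E1 E2 (lex1 _ P1u1 E1) (lex2 _ P2u2 E2).
Qed.

End LeastLongest.

Section BPA.
Variables (d : Order.disp_t) (V : finOrderType d) (Act : finType) (R : rules V Act).

Local Notation step := (step R).
Local Infix "≈" := (bbisim R) (at level 70).
Local Notation taus P := (clos_refl_trans (seq V) (fun x y => step x None y /\ P y)).

Lemma step_nil a t : ~ step [::] a t.
Proof. by case=> [A [b [al []]]]. Qed.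

Lemma step_catr x s a x' : step x a x' -> step (x ++ s) a (x' ++ s).
Proof. by case=> [A [b [al [-> [H ->]]]]]; exists A, (b ++ s), al; rewrite -catA. Qed.

Lemma step_cat x s a t : x != [::] -> step (x ++ s) a t ->
  exists2 x', step x a x' & t = x' ++ s.
Proof.
case: x => // X x _ [A [b [al [[<- <-] [H ->]]]]].
by exists (al ++ x); [exists X, x, al | rewrite catA].
Qed.

Lemma taus_catr (P Q : seq V -> Prop) g x y :
  (forall z, P z -> Q (z ++ g)) -> taus P x y -> taus Q (x ++ g) (y ++ g).
Proof.
by move=> PQ; apply: (clos_rt_map (f := cat^~ g)) => a b [/step_catr Sab /PQ].
Qed.

(** * Branching bisimilarity *)

Lemma transfer_mono (B1 B2 : seq V -> seq V -> Prop) s t :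
  (forall x y, B1 x y -> B2 x y) -> transfer R B1 s t -> transfer R B2 s t.
Proof.
move=> B12 T a s' /T [[-> /B12 Hs']|[tk [t' [P [S /B12 Hs']]]]]; first by left.
right; exists tk, t'; split=> //.
by apply: clos_rt_mono P => u v [? /B12].
Qed.

Lemma symmetric_bisimulation (B : seq V -> seq V -> Prop) :
  (forall x y, B x y -> B y x) -> (forall x y, B x y -> transfer R B x y) ->
  branching_bisimulation R B.
Proof.
move=> Bsym T x y Bxy; split; first exact: T.
by apply: transfer_mono (T _ _ (Bsym _ _ Bxy)) => p q /Bsym.
Qed.

Lemma bbisim_transfer s t : s ≈ t -> transfer R (bbisim R) s t.
Proof.
case=> B [HB Bst]; apply: transfer_mono (proj1 (HB _ _ Bst)) => x y Bxy.
by exists B.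
Qed.

Lemma bbisim_refl s : s ≈ s.
Proof.
exists eq; split=> // x _ <-; split=> a s' Ss'; right.
  by exists x, s'; split; [apply: rt_refl|].
by exists x, s'; split; [apply: rt_refl|].
Qed.

Lemma bbisim_sym s t : s ≈ t -> t ≈ s.
Proof.
case=> B [HB Bst]; exists (fun x y => B y x); split=> // x y Byx.
by case: (HB _ _ Byx).
Qed.

Lemma taus_last (P : seq V -> Prop) x y : P x -> taus P x y -> P y.
Proof.
by move=> Px; apply: (clos_refl_trans_ind_left _ _ _ _ Px) => u v _ _ [].
Qed.

Section Transitivity.

Let comp x y := exists2 u, x ≈ u & u ≈ y.

Let match_taus s u uk : taus (bbisim R s) u uk -> s ≈ u -> forall t, u ≈ t ->
  exists2 tc, taus (comp s) t tc & uk ≈ tc.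
Proof.
move=> P; elim: {P}(clos_rt_rt1n _ _ _ _ P) => [x|x y z [Sxy Hsy] _ IH] Hsx t Hxt.
  by exists t; [apply: rt_refl|].
case: (bbisim_transfer Hxt Sxy) => [[_ Hyt]|[tk [t' [P [S Hyt']]]]].
  exact: IH.
have [tc Ptc Hzc] := IH Hsy t' Hyt'; exists tc => //.
apply: (rt_trans _ _ _ tk); last apply: (rt_trans _ _ _ t') Ptc.
  by apply: clos_rt_mono P => a b [Sab Hxb]; split=> //; exists x.
by apply: rt_step; split=> //; exists y.
Qed.

Let comp_transfer s t : comp s t -> transfer R comp s t.
Proof.
move=> [u Hsu Hut] a s' Ss.
case: (bbisim_transfer Hsu Ss) => [[-> Hs'u]|[uk [u' [P [Su Hs'u']]]]].
  by left; split=> //; exists u.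
have [tc Pt Hukt] := match_taus P Hsu Hut.
have Hsuk := taus_last Hsu P.
case: (bbisim_transfer Hukt Su) => [[-> Hu'tc]|[tk [t' [P2 [S2 H2]]]]].
  destruct (clos_rt_rtn1 _ _ _ _ Pt) as [|tp tc' [Stp Hc] Pn].
    by left; split=> //; exists u'.
  right; exists tp, tc'; split; first exact: clos_rtn1_rt.
  by split=> //; exists u'.
right; exists tk, t'; split; last by split=> //; exists u'.
apply: (rt_trans _ _ _ tc _ Pt); apply: clos_rt_mono P2 => x y [Sx Hx].
by split=> //; exists uk.
Qed.

Lemma bbisim_trans s u t : s ≈ u -> u ≈ t -> s ≈ t.
Proof.
move=> Hsu Hut; exists comp; split; last by exists u.
apply: symmetric_bisimulation; last exact: comp_transfer.
by move=> x y [w Hxw Hwy]; exists w; apply: bbisim_sym.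
Qed.

End Transitivity.

Lemma bbisim_catl a g h : g ≈ h -> a ++ g ≈ a ++ h.
Proof.
move=> Hgh; exists (fun x y => exists a g h, [/\ x = a ++ g, y = a ++ h & g ≈ h]).
split; last by exists a, g, h.
apply: symmetric_bisimulation => [x y [a' [g' [h' [-> -> /bbisim_sym H]]]]|].
  by exists a', h', g'.
move=> x y [[|X a'] [g' [h' [-> -> H]]]] /=.
  by apply: transfer_mono (bbisim_transfer H) => p q Hpq; exists [::], p, q.
move=> b s' /(step_cat (isT : X :: a' != [::])) [x' Sx ->].
right; exists (X :: a' ++ h'), (x' ++ h'); split; first exact: rt_refl.
by split; [exact: (step_catr h' Sx) | exists x', g', h'].
Qed.

Lemma taus_nil P t : taus P [::] t -> t = [::].
Proof.
by elim/clos_refl_trans_ind_left => // u v _ -> [/step_nil].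
Qed.

(* The path never consumes [b]: it would pass through [g], which is not bisimilar to [s]. *)
Lemma taus_above s b g u : ~ s ≈ g -> b != [::] -> taus (bbisim R s) (b ++ g) u ->
  exists2 b', u = b' ++ g & b' != [::] /\ taus (fun y => s ≈ y ++ g) b b'.
Proof.
move=> Hsg Hb; elim/clos_refl_trans_ind_left => [|_ v _ [b' -> [Hb' Pb']]].
  by exists b; split=> //; apply: rt_refl.
case=> /(step_cat Hb') [b'' Sb'' ->] Hsv.
exists b''; split; last exact: rt_trans Pb' (rt_step _ _ _ _ (conj Sb'' Hsv)).
by case: b'' {Sb''} Hsv => // /Hsg.
Qed.

Section Normed.

Hypothesis normedR : normed R.

Lemma reach_nil s : reach R s [::].
Proof.
elim: s => [|X s IH]; first exact: rt_refl.
apply: (rt_trans _ _ _ s) => //.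
by apply: (clos_rt_map (f := cat^~ s)) (normedR X) => p q [a /step_catr Sa]; exists a.
Qed.

Lemma normed_ind (P : seq V -> Prop) :
  P [::] -> (forall s a s', step s a s' -> P s' -> P s) -> forall s, P s.
Proof.
move=> P0 PS s; apply: (clos_refl_trans_ind_right _ _ _ _ P0) (reach_nil s).
by move=> x y [a Sa] Py _; apply: PS Sa Py.
Qed.

Lemma bbisim_nil_taus s : s ≈ [::] -> taus (fun y => y ≈ [::]) s [::].
Proof.
elim/normed_ind: s => [_|s a s' Ss IH Hs]; first exact: rt_refl.
case: (bbisim_transfer Hs Ss) => [[Ea Hs']|[tk [t' [/taus_nil -> [/step_nil]]]]] //.
by apply: rt_trans (IH Hs'); apply: rt_step; rewrite -Ea.
Qed.

(* Since inert tau-steps are not counted, this measure is invariant under bisimilarity. *)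
Inductive ends_within : seq V -> nat -> Prop :=
| EndNil n : ends_within [::] n
| EndInert s s' n : step s None s' -> s ≈ s' -> ends_within s' n -> ends_within s n
| EndStep s a s' n : step s a s' -> ends_within s' n -> ends_within s n.+1.

Lemma ends_within_mono s n m : ends_within s n -> n <= m -> ends_within s m.
Proof.
move=> Hs; elim: Hs m => [k|x y k Sx Hxy _ IH|x a y k Sx _ IH] m Hm.
- exact: EndNil.
- exact: EndInert Sx Hxy (IH _ Hm).
- by case: m Hm => // m Hm; apply: EndStep Sx (IH _ Hm).
Qed.

Lemma ends_within_exists s : exists n, ends_within s n.
Proof.
elim/normed_ind: s => [|s a s' Ss [n Hn]]; first by exists 0; apply: EndNil.
by exists n.+1; apply: EndStep Ss Hn.
Qed.

Lemma ends_within_taus s x z n :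
  taus (bbisim R s) x z -> s ≈ x -> ends_within z n -> ends_within x n.
Proof.
move=> P Hsx Hz; move: P Hsx.
elim/clos_refl_trans_ind_right => // u v [Suv Hsv] IH _ Hsu.
exact: EndInert Suv (bbisim_trans (bbisim_sym Hsu) Hsv) (IH Hsv).
Qed.

Lemma ends_within_bbisim s t n : ends_within s n -> s ≈ t -> ends_within t n.
Proof.
move=> Hs; elim: Hs t => [k|x y k Sx Hxy _ IH|x a y k Sx _ IH] t Ht.
- apply: (ends_within_taus (s := t)) (EndNil k); last exact: bbisim_refl.
  apply: clos_rt_mono (bbisim_nil_taus (bbisim_sym Ht)) => u v [Suv Hv].
  by split=> //; apply: bbisim_trans (bbisim_sym Ht) (bbisim_sym Hv).
- exact: IH (bbisim_trans (bbisim_sym Hxy) Ht).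
- case: (bbisim_transfer Ht Sx) => [[_ Hyt]|[tk [t' [P [S Hyt']]]]].
    exact: ends_within_mono (IH _ Hyt) (leqnSn _).
  exact: ends_within_taus P Ht (EndStep S (IH _ Hyt')).
Qed.

(* On the way from [e ++ g] to [[::]] the suffix [g] is reached, and either every step
   before was inert or one of them was paid for. *)
Lemma ends_within_cat e g n : ends_within (e ++ g) n ->
  (e ++ g ≈ g /\ ends_within g n) \/ (0 < n /\ ends_within g n.-1).
Proof.
move Es: (e ++ g) => s Hs; elim: Hs e Es => [k|x y k Sx Hxy Hy IH|x a y k Sx Hy IH] [|X e] //= Es.
- by case: g Es => // _; left; split; [apply: bbisim_refl | apply: EndNil].
- by subst x; left; split; [apply: bbisim_refl | apply: EndInert Sx Hxy Hy].
- move: Sx; rewrite -Es => /(step_cat (isT : X :: e != [::])) [e' _ Ey].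
  case: (IH _ (esym Ey)) => [[Hyg Hg]|]; last by right.
  by left; split=> //; rewrite -Es in Hxy; apply: bbisim_trans Hxy Hyg.
- by subst x; left; split; [apply: bbisim_refl | apply: EndStep Sx Hy].
- move: Sx; rewrite -Es => /(step_cat (isT : X :: e != [::])) [e' _ Ey].
  right; split=> //; case: (IH _ (esym Ey)) => [[_ Hg]|[_ Hg]] //.
  exact: ends_within_mono Hg (leq_pred _).
Qed.

Lemma ends_within_suffix e g n : ends_within (e ++ g) n -> ends_within g n.
Proof.
by case/ends_within_cat=> [[]|[_ /ends_within_mono]] // /(_ _ (leq_pred n)).
Qed.

Lemma bbisim_suffix e1 e2 g : e1 ++ e2 ++ g ≈ g -> e2 ++ g ≈ g.
Proof.
move=> H; have [n [Hn Hmin]] := ex_min (ends_within_exists g).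
have /ends_within_suffix := ends_within_bbisim Hn (bbisim_sym H).
case/ends_within_cat=> [[]|[n_gt0 /Hmin]] //.
by case: n n_gt0 {Hn Hmin} => //= n _; rewrite ltnn.
Qed.

Definition same_Rset g g' := forall X, X :: g ≈ g <-> X :: g' ≈ g'.

Lemma same_Rset_sym g g' : same_Rset g g' -> same_Rset g' g.
Proof. by move=> Hgg' X; split=> /Hgg'. Qed.

Lemma same_Rset_trans g1 g2 g3 : same_Rset g1 g2 -> same_Rset g2 g3 -> same_Rset g1 g3.
Proof. by move=> H12 H23 X; split=> [/H12/H23|/H23/H12]. Qed.

Lemma Rset_same_Rset g g' : Rset R g = Rset R g' -> same_Rset g g'.
Proof. by move=> E X; rewrite -[_ ≈ g]/(Rset R g X) -[_ ≈ g']/(Rset R g' X) E. Qed.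

Lemma bbisim_same_Rset g g' : g ≈ g' -> same_Rset g g'.
Proof.
move=> Hgg' X; have HX := bbisim_catl [:: X] Hgg'; split=> HXg.
  exact: bbisim_trans (bbisim_trans (bbisim_sym HX) HXg) Hgg'.
exact: bbisim_trans (bbisim_trans HX HXg) (bbisim_sym Hgg').
Qed.

Lemma bbisim_absorb a g g' : a ++ g ≈ g -> same_Rset g g' -> a ++ g' ≈ g'.
Proof.
move=> + Hgg'; elim: a => [|X a IH] H /=; first exact: bbisim_refl.
have Hag : a ++ g ≈ g := bbisim_suffix (e1 := [:: X]) H.
have HXg : X :: g ≈ g := bbisim_trans (bbisim_catl [:: X] (bbisim_sym Hag)) H.
exact: bbisim_trans (bbisim_catl [:: X] (IH Hag)) ((Hgg' X).1 HXg).
Qed.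

Lemma bbisim_cat_same_Rset g g' a b :
  same_Rset g g' -> a ++ g ≈ b ++ g -> a ++ g' ≈ b ++ g'.
Proof.
move=> Hgg' Hab.
pose B x y := exists a b g g',
  [/\ x = a ++ g', y = b ++ g', a ++ g ≈ b ++ g & same_Rset g g'].
exists B; split; last by exists a, b, g, g'.
apply: symmetric_bisimulation => [x y [a1 [b1 [g1 [g1' [-> -> /bbisim_sym H Hr]]]]]|].
  by exists b1, a1, g1, g1'.
move=> {a b g g' Hgg' Hab} x y [a [b [g [g' [-> -> Hab Hgg']]]]].
(* Once [a ++ g] is in the class of [g], [bbisim_absorb] makes the suffix irrelevant;
   otherwise every matching step takes place inside the prefixes [a] and [b]. *)
case: (classic (a ++ g ≈ g)) => Hag.
  have Hbg : b ++ g ≈ g := bbisim_trans (bbisim_sym Hab) Hag.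
  apply: transfer_mono (bbisim_transfer _) => [u v Huv|].
    by exists u, v, [::], [::]; rewrite !cats0.
  exact: bbisim_trans (bbisim_absorb Hag Hgg') (bbisim_sym (bbisim_absorb Hbg Hgg')).
have Hbg : ~ b ++ g ≈ g by move=> Hbg; apply: Hag (bbisim_trans Hab Hbg).
have a_nonnil : a != [::] by case: a Hab Hag => // _ /(_ (bbisim_refl _)).
have b_nonnil : b != [::] by case: b Hab Hbg => // _ /(_ (bbisim_refl _)).
move=> c s' /(step_cat a_nonnil) [a' Sa ->].
case: (bbisim_transfer Hab (step_catr g Sa)) => [[-> Ha'b]|[tk [t' [P [S Hb']]]]].
  by left; split=> //; exists a', b, g, g'.
have [bk Etk [bk_nonnil Pk]] := taus_above Hag b_nonnil P.
move: S Hb'; rewrite Etk => /(step_cat bk_nonnil) [b' Sb' ->] Ha'b'.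
right; exists (bk ++ g'), (b' ++ g'); split.
  by apply: taus_catr Pk => z Hz; exists a, z, g, g'.
by split; [apply: step_catr | exists a', b', g, g'].
Qed.

Lemma same_Rset_cons A g g' : same_Rset g g' -> same_Rset (A :: g) (A :: g').
Proof.
move=> Hgg' X; split; first exact: (bbisim_cat_same_Rset (a := [:: X; A]) (b := [:: A]) Hgg').
exact: (bbisim_cat_same_Rset (a := [:: X; A]) (b := [:: A]) (same_Rset_sym Hgg')).
Qed.

(** * Redundancy-free strings *)

Local Notation rf := (redundancy_free R).

Lemma rf_nil g : rf [::] g.
Proof. by case=> [[|? ?] [X [b []]]]. Qed.

Lemma rf_cons X a g : rf (X :: a) g <-> rf a g /\ ~ X :: a ++ g ≈ a ++ g.
Proof.
split=> [H|[H1 H2] [[|Y dl] [Z [b [Ea Hb]]]]].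
- split=> [[dl [Y [b [Ea Hb]]]]|Hb]; apply: H; last by exists [::], X, a.
  by exists (X :: dl), Y, b; rewrite Ea.
- by case: Ea Hb => <- <-.
- by case: Ea => _ Ea; apply: H1; exists dl, Z, b.
Qed.

Lemma rf_cat a b g : rf (a ++ b) g <-> rf a (b ++ g) /\ rf b g.
Proof.
elim: a => [|X a IH] /=; first by split=> [H|[]//]; split=> //; apply: rf_nil.
by rewrite !rf_cons IH -catA; tauto.
Qed.

Lemma rf_same_Rset a g g' : same_Rset g g' -> rf a g -> rf a g'.
Proof.
move=> Hgg'; elim: a => [|X a IH]; first by move=> _; apply: rf_nil.
case/rf_cons=> Ha HX; apply/rf_cons; split; first exact: IH.
by move/(bbisim_cat_same_Rset (a := X :: a) (b := a) (same_Rset_sym Hgg')).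
Qed.

Lemma rf_reduct e g :
  exists r, [/\ rf r g, r ++ g ≈ e ++ g & ~ e ++ g ≈ g -> r != [::]].
Proof.
elim: e => [|X e [r [Hr Hre Hr_nonnil]]].
  by exists [::]; split=> [||/(_ (bbisim_refl _))]; [apply: rf_nil|apply: bbisim_refl|].
have HXre : X :: r ++ g ≈ X :: e ++ g := bbisim_catl [:: X] Hre.
case: (classic (X :: r ++ g ≈ r ++ g)) => HX; last first.
  by exists (X :: r); split=> //; apply/rf_cons.
exists r; split=> //; first exact: bbisim_trans (bbisim_sym HX) HXre.
move=> HXe; apply: Hr_nonnil => Heg; apply: HXe.
by apply: bbisim_trans (bbisim_sym HXre) (bbisim_trans HX (bbisim_trans Hre Heg)).
Qed.

Lemma rf_size a g n : rf a g -> ends_within (a ++ g) n -> size a <= n.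
Proof.
elim: a n => [|X a IH] n //= /rf_cons [Ha HX] Hn.
have [[]|[n_gt0 Hn']] := ends_within_cat (e := [:: X]) Hn => //.
by have := IH _ Ha Hn'; case: n n_gt0 {Hn Hn'}.
Qed.

Lemma bbisim_tails e a th b : e ++ a ≈ th ++ b ->
  (exists z, a ≈ z ++ b) \/ (exists z, b ≈ z ++ a).
Proof.
elim/normed_ind: e th => [|e c e' Se IH] th Hb; first by left; exists th.
case: (classic (e ++ a ≈ b)) => Heb; first by right; exists e; apply: bbisim_sym.
have th_nonnil : th != [::] by case: th Hb => // /Heb.
case: (bbisim_transfer Hb (step_catr a Se)) => [[_ Hy]|[tk [t' [P [S Hb']]]]].
  exact: IH Hy.
have [th' Etk [th'_nonnil _]] := taus_above Heb th_nonnil P.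
move: S Hb'; rewrite Etk => /(step_cat th'_nonnil) [th'' _ ->].
exact: IH.
Qed.

(* The redundancy-free string [d1 ++ X :: d2] can be lengthened: [X] is replaced by reducts of
   [z'] and [z], which jointly reproduce [X :: d2] and are both nonempty. *)
Lemma rf_pump d1 X d2 g z z' :
  rf (d1 ++ X :: d2) [::] -> X :: d2 ≈ z' ++ g -> g ≈ z ++ d2 ->
  ~ z ++ d2 ≈ d2 -> ~ g ≈ X :: d2 ->
  exists2 e, size (X :: d2) < size e & rf (d1 ++ e) [::] /\ d1 ++ e ≈ d1 ++ X :: d2.
Proof.
move=> Hrf HXz' Hgz Hzd HgX.
have [r [Hr Hrz r_nonnil]] := rf_reduct z d2.
have Hrg : r ++ d2 ≈ g := bbisim_trans Hrz (bbisim_sym Hgz).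
have [r' [Hr' Hr'z' r'_nonnil]] := rf_reduct z' (r ++ d2).
have Hz'r : z' ++ r ++ d2 ≈ z' ++ g := bbisim_catl z' Hrg.
have HeX : r' ++ r ++ d2 ≈ X :: d2.
  exact: bbisim_trans Hr'z' (bbisim_trans Hz'r (bbisim_sym HXz')).
have Hz' : ~ z' ++ r ++ d2 ≈ r ++ d2.
  move=> Hz'rr; apply: HgX; apply: bbisim_sym.
  exact: bbisim_trans HXz' (bbisim_trans (bbisim_sym Hz'r) (bbisim_trans Hz'rr Hrg)).
exists (r' ++ r ++ d2).
  by move: (r_nonnil Hzd) (r'_nonnil Hz'); rewrite -!size_eq0 /= !size_cat; lia.
move: Hrf => /rf_cat [Hd1 /rf_cons [Hd2 _]].
split; last exact: bbisim_catl.
apply/rf_cat; rewrite cats0; split.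
  by apply: rf_same_Rset Hd1; apply: bbisim_same_Rset; rewrite cats0; apply: bbisim_sym.
by apply/rf_cat; split; [|apply/rf_cat]; rewrite ?cats0.
Qed.

(* Split [r = r1 ++ r2] with [r1] shortest such that [g] is bisimilar to some [z ++ r2].
   Unless [r2] is bisimilar to [g], [rf_pump] yields a longer redundancy-free string. *)
Lemma maximal_rf_split A g r : rf r [::] -> r ≈ A :: g ->
  (forall r', rf r' [::] -> r' ≈ A :: g -> size r' <= size r) ->
  exists r1 r2, r = r1 ++ r2 /\ r2 ≈ g.
Proof.
move=> Hr HrAg Hmax.
pose P n := exists r1 r2 z, [/\ r = r1 ++ r2, size r1 = n & g ≈ z ++ r2].
have [n [[r1 [r2 [z [Er Hn Hz]]]] Hmin]] : exists n, P n /\ forall m, P m -> n <= m.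
  by apply: ex_min; exists (size r), r, [::], g; rewrite !cats0; split=> //; apply: bbisim_refl.
have small r1' r2' z' : size r1' < n -> r = r1' ++ r2' -> ~ g ≈ z' ++ r2'.
  move=> lt Er' Hg; suff /Hmin : P (size r1') by rewrite leqNgt lt.
  by exists r1', r2', z'.
case/lastP: r1 Er Hn => [|r1 X] Er Hn.
  exists [::], r; split=> //; apply: bbisim_trans (HrAg) _.
  apply: (bbisim_suffix (e1 := z) (e2 := [:: A])); apply: bbisim_sym.
  by apply: bbisim_trans Hz (bbisim_catl z _); rewrite Er in HrAg.
rewrite cat_rcons in Er; rewrite size_rcons in Hn; subst r.
have [[z' Hz']|[z' Hz']] := bbisim_tails (e := r1) (th := [:: A]) HrAg; last first.
  by case: (small _ _ z' _ erefl Hz'); rewrite -Hn.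
case: (classic (z ++ r2 ≈ r2)) => Hzr2.
  exists (rcons r1 X), r2; rewrite cat_rcons; split=> //.
  exact: bbisim_sym (bbisim_trans Hz Hzr2).
have [|e Hlonger [He HeAg]] := rf_pump Hr Hz' Hz Hzr2 (small r1 (X :: r2) [::] _ erefl).
  by rewrite -Hn.
have := Hmax _ He (bbisim_trans HeAg HrAg).
by rewrite !size_cat leq_add2l leqNgt Hlonger.
Qed.

(** * Canonical forms *)

Definition rf_repr s r := rf r [::] /\ r ≈ s.

Lemma rf_size_bound s : exists m, forall a g, rf a g -> a ++ g ≈ s -> size a <= m.
Proof.
have [m Hm] := ends_within_exists s; exists m => a g Ha Hag.
exact: rf_size Ha (ends_within_bbisim Hm (bbisim_sym Hag)).
Qed.

Lemma rf_repr_nil : least_longest (rf_repr [::]) [::].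
Proof.
have only_nil r : rf_repr [::] r -> r = [::].
  case/lastP: r => // r X [+ Hr]; rewrite -cats1 => /rf_cat [_ /rf_cons [_ []]].
  by have := bbisim_suffix (e1 := r) (e2 := [:: X]) (g := [::]); rewrite !cats0 cats1; apply.
split; first by split; [apply: rf_nil | apply: bbisim_refl].
by split=> r /only_nil ->; [|left].
Qed.

Lemma rf_repr_split A g r : rf_repr (A :: g) r ->
  (forall t, rf_repr (A :: g) t -> size t <= size r) ->
  exists r1 r2, [/\ r = r1 ++ r2, candidate R A g r1 & rf_repr g r2].
Proof.
move=> [Hrf Hr] Hmax.
have [r1 [r2 [Er Hr2]]] := maximal_rf_split Hrf Hr (fun t Ht Htr => Hmax t (conj Ht Htr)).
move: Hrf Hr; rewrite Er => /rf_cat [Hr1 Hr2rf] Hr.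
exists r1, r2; split=> //; split.
- exact: bbisim_trans (bbisim_catl r1 (bbisim_sym Hr2)) Hr.
- by apply: rf_same_Rset Hr1; apply: bbisim_same_Rset; rewrite cats0.
Qed.

Lemma candidate_same_Rset A g g' r :
  same_Rset g g' -> candidate R A g r -> candidate R A g' r.
Proof.
move=> Hgg' [Hr Hrf]; split; last exact: rf_same_Rset Hrf.
exact: (bbisim_cat_same_Rset (b := [:: A]) Hgg').
Qed.

Lemma canonical_output_same_Rset A g g' :
  same_Rset g g' -> canonical_output R A g = canonical_output R A g'.
Proof.
move=> Hgg'; apply: functional_extensionality => r; apply: propositional_extensionality.
have Hg'g := same_Rset_sym Hgg'.
by split; apply: least_longest_ext => t; split; apply: candidate_same_Rset.
Qed.

Lemma canonical_output_exists A g : exists r, canonical_output R A g r.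
Proof.
have [m Hm] := rf_size_bound (A :: g).
apply: (least_longest_exists (m := m)) => [|r [Hr Hrf]]; last exact: Hm Hrf Hr.
by have [r [Hrf Hr _]] := rf_reduct [:: A] g; exists r.
Qed.

Definition canonical_output_of A g := epsilon (inhabits [::]) (canonical_output R A g).

Fixpoint canonical_form s :=
  if s is A :: g then canonical_output_of A g ++ canonical_form g else [::].

Lemma canonical_form_spec s : least_longest (rf_repr s) (canonical_form s).
Proof.
elim: s => [|A g IH]; first exact: rf_repr_nil.
have Hc : least_longest (candidate R A g) (canonical_output_of A g).
  exact: epsilon_spec (canonical_output_exists A g).
have [m Hm] := rf_size_bound (A :: g).
apply: (least_longest_cat (m := m) _ (@rf_repr_split A g) _ Hc IH).
  by move=> r [Hrf Hr]; apply: Hm Hrf _; rewrite cats0.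
have [[Hcg Hcrf] _] := Hc; have [[Hnrf Hn] _] := IH.
split; last exact: bbisim_trans (bbisim_catl _ Hn) Hcg.
apply/rf_cat; split=> //; apply: rf_same_Rset Hcrf.
by apply: bbisim_same_Rset; rewrite cats0; apply: bbisim_sym.
Qed.

Lemma canonical_form_bbisim s t : canonical_form s = canonical_form t <-> s ≈ t.
Proof.
have [[_ Hs] _] := canonical_form_spec s; have [[_ Ht] _] := canonical_form_spec t.
split=> [Est|Hst].
  by apply: bbisim_trans (bbisim_sym Hs) _; rewrite Est.
apply: least_longest_unique (canonical_form_spec s) _.
apply: least_longest_ext (canonical_form_spec t) => r.
split=> [] [Hr Hrt]; split=> //; first exact: bbisim_trans Hrt (bbisim_sym Hst).
exact: bbisim_trans Hrt Hst.
Qed.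

(* The transducer computes outputs from arbitrary representatives of its states;
   [canonical_output_same_Rset] makes them agree with those computed from [s]. *)
Lemma canonical_transducer_run s : exists g,
  [/\ (tr_run (tr_init (canonical_transducer R)) s).1 = Rset R g, same_Rset g s
    & (tr_run (tr_init (canonical_transducer R)) s).2 = canonical_form s].
Proof.
elim: s => [|A s [g [Hq Hgs Hout]]] /=; first by exists [::].
case: (tr_run _ s) Hq Hout => [q out] /= -> ->.
rewrite /canon_delta /=; set g' := epsilon _ _.
have Hg' : Rset R g' = Rset R g.
  exact: (epsilon_spec _ (fun h => Rset R h = Rset R g) (ex_intro _ g erefl)).
have Hg's : same_Rset g' s := same_Rset_trans (Rset_same_Rset Hg') Hgs.
exists (A :: g'); split=> //; first exact: same_Rset_cons.
by rewrite /canonical_output_of (canonical_output_same_Rset A Hg's).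
Qed.

Lemma TG_canonical_form s : TG R s = canonical_form s.
Proof. by have [g [_ _ Hout]] := canonical_transducer_run s. Qed.

End Normed.
End BPA.

Theorem theorem4p7 (d : Order.disp_t) (V : finOrderType d) (Act : finType)
  (R : rules V Act) :
  normed R ->
  forall alpha beta : seq V, TG R alpha = TG R beta <-> bbisim R alpha beta.
Proof.
move=> normedR alpha beta.
by rewrite !(TG_canonical_form normedR) canonical_form_bbisim.
Qed.
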